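(* Let $k\ge2$, $n>2^k$ and $c=2^k-2$. Let $C=[u_1\oplus\ell_1]\cup\dots\cup[u_s\oplus\ell_s]\subseteq V$, where $0\le u_1<\dots<u_s\le n-1$ and $s$ is minimal. Then $C$ is a maximal covered set, i.e. $C=C(T)$ for some $T\in\mathcal{T}_k$ and there is no $T'\in\mathcal{T}_k$ with $C(T)\subsetneq C(T')$, if and only if (i) $u_1\neq 1$ and $u_s+\ell_s-1\neq n-2$; (ii) $u_{t+1}-(u_t+\ell_t)\ge 2$ for all $t\in\{1,\dots,s-1\}$, and $u_1-(u_s+\ell_s-n)\ge 2$; (iii) $\sum_{t=1}^s\ell_t=c+1-s$ if $\{0,n-1\}\cap C=\emptyset$, and $\sum_{t=1}^s\ell_t=c+2-s$ otherwise.
   Context: $G$ is the path graph with $V=\{0,\dots,n-1\}$ and edges $\{v,v+1\}$, $0\le v\le n-2$. A search strategy for a tree $H$ is a rooted binary tree defined recursively: a single node is a search strategy for any $H$; otherwise the root is labeled with an edge $uv$ of $H$ and its two child subtrees are search strategies for the components $H_u,H_v$ of $H-uv$ containing $u,v$. Nodes get vertex sets: the root gets $V(H)$, the children of a root labeled $uv$ get $V(H_u),V(H_v)$, recursively. $C(T)$ is the set of vertices $v$ with $V(\lambda)=\{v\}$ for a leaf $\lambda$ of $T$. The height of $T$ is the maximum number of edges on a root-to-leaf path; $\mathcal{T}_k$ is the set of search strategies for $G$ of height at most $k$. For integers $u,\ell$, $[u\oplus\ell]=\{w\bmod n: u\le w\le u+\ell-1\}$. *)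

From mathcomp Require Import all_boot all_order all_algebra.
Set Implicit Arguments. Unset Strict Implicit. Unset Printing Implicit Defensive.
Import Order.TTheory GRing.Theory Num.Theory.

(* Every subtree of the path G = 0 - 1 - ... - (n-1) is a subpath, i.e. an
   interval {a,...,b}; we index the subtree H by its endpoints a <= b.  A
   search strategy is a rooted binary tree whose inner nodes are labeled by an
   edge {v, v+1} (represented by v). *)
Inductive strat : Type :=
  | Leaf : strat
  | Node : nat -> strat -> strat -> strat.

Fixpoint is_strat (a b : nat) (T : strat) : Prop :=
  match T with
  | Leaf => True
  | Node v L R => (a <= v < b)%N /\ is_strat a v L /\ is_strat v.+1 b R
  end.

Fixpoint height (T : strat) : nat :=
  match T with
  | Leaf => 0
  | Node _ L R => (maxn (height L) (height R)).+1
  end.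

Fixpoint covered (a b : nat) (T : strat) (x : nat) : Prop :=
  match T with
  | Leaf => a = b /\ x = a
  | Node v L R => covered a v L x \/ covered v.+1 b R x
  end.

Definition in_Tk (n k : nat) (T : strat) : Prop :=
  is_strat 0 n.-1 T /\ (height T <= k)%N.

Definition CT (n : nat) (T : strat) : nat -> Prop := covered 0 n.-1 T.

Definition maximal_covered_set (n k : nat) (C : nat -> Prop) : Prop :=
  exists T, in_Tk n k T /\ (forall x, C x <-> CT n T x) /\
    ~ (exists T', in_Tk n k T' /\
         (forall x, CT n T x -> CT n T' x) /\
         (exists x, CT n T' x /\ ~ CT n T x)).

Definition cyc_interval (n u l : nat) (x : nat) : Prop :=
  exists w, (u <= w < u + l)%N /\ x = w %% n.

Definition is_rep (n : nat) (C : nat -> Prop) (s : nat) (u l : nat -> nat) : Prop :=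
  (forall t, (1 <= t < s)%N -> (u t < u t.+1)%N) /\
  (forall t, (1 <= t <= s)%N -> (u t <= n - 1)%N) /\
  (forall x, C x <-> exists t, (1 <= t <= s)%N /\ cyc_interval n (u t) (l t) x).

Definition is_min_rep (n : nat) (C : nat -> Prop) (s : nat) (u l : nat -> nat) : Prop :=
  is_rep n C s u l /\
  (forall s' u' l', is_rep n C s' u' l' -> (s <= s')%N).

(* A strategy of height h cuts the path into at most 2^h subpaths (its leaves),
   and a vertex is covered iff its leaf is a singleton.  Hence every uncovered
   vertex has an uncovered neighbour, and if f counts the edges with both ends
   uncovered then n <= f + 2^h, since a leaf with m vertices contains m - 1 such
   edges.  Conversely, every set with these two properties is covered by a
   strategy of height h: cut the path at an edge with a covered end so that both
   halves satisfy the bound for h - 1.  A covered set is therefore maximal iff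
   n = f + 2^k; otherwise the left end of a run of uncovered vertices can be
   covered too (with its neighbour, if that one would become isolated), losing a
   single such edge.  Finally, when C consists of s arcs of the cycle separated by
   nonempty gaps, the cycle has n - (l_1 + ... + l_s) - s edges with both ends
   uncovered, so f is this number, minus one if 0 and n - 1 are both uncovered;
   and "no isolated uncovered vertex" amounts to conditions (i) and (ii). *)

From mathcomp Require Import all_boot all_order all_algebra zify.
Import Order.TTheory GRing.Theory Num.Theory.
Set Implicit Arguments. Unset Strict Implicit. Unset Printing Implicit Defensive.

(** * Covered sets of strategies of bounded height *)

Fixpoint coveredb (a b : nat) (T : strat) (x : nat) : bool :=
  match T with
  | Leaf => (a == b) && (x == a)
  | Node v L R => coveredb a v L x || coveredb v.+1 b R x
  end.

Lemma coveredP a b T x : reflect (covered a b T x) (coveredb a b T x).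
Proof.
elim: T a b => [|v L IHL R IHR] a b /=.
  by apply: (iffP andP) => [[/eqP-> /eqP->]|[-> ->]].
by apply: (iffP orP) => -[/IHL h|/IHR h]; [left|right|left|right].
Qed.

Lemma coveredb_bounds a b T x : is_strat a b T -> coveredb a b T x -> a <= x <= b.
Proof.
elim: T a b => [|v L IHL R IHR] a b /=.
  by move=> _ /andP[/eqP-> /eqP->]; rewrite leqnn.
move=> [/andP[av vb] [sL sR]] /orP[/(IHL _ _ sL)|/(IHR _ _ sR)]; lia.
Qed.

Lemma is_strat_node a b v L R : is_strat a b (Node v L R) ->
  [/\ a <= v < b, is_strat a v L & is_strat v.+1 b R].
Proof. by case=> ? []. Qed.

Lemma coveredb_node_l a b v L R x : is_strat v.+1 b R -> x <= v ->
  coveredb a b (Node v L R) x = coveredb a v L x.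
Proof.
move=> sR xv /=; case: (boolP (coveredb v.+1 b R x)) => [/(coveredb_bounds sR)|_]; first lia.
by rewrite orbF.
Qed.

Lemma coveredb_node_r a b v L R x : is_strat a v L -> v < x ->
  coveredb a b (Node v L R) x = coveredb v.+1 b R x.
Proof.
by move=> sL vx /=; case: (boolP (coveredb a v L x)) => [/(coveredb_bounds sL)|] //; lia.
Qed.

(* The edge {x-1, x} is indexed by its right end x. *)
Definition free_edge (p : pred nat) x : nat := ~~ p x && ~~ p x.-1.

Definition free_edges (p : pred nat) a b := \sum_(a.+1 <= x < b.+1) free_edge p x.

Definition no_isolated_hole (p : pred nat) a b := forall x, a <= x <= b -> ~~ p x ->
  (a < x /\ ~~ p x.-1) \/ (x < b /\ ~~ p x.+1).

Lemma covered_edge (p : pred nat) a b y : a < b -> a <= y <= b -> p y ->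
  exists2 v, a <= v < b & p v || p v.+1.
Proof.
move=> ab ayb py; case: (ltnP y b) => yb; first by exists y; [lia | rewrite py].
by exists y.-1; [lia | rewrite prednK ?py ?orbT //; lia].
Qed.

Section FreeEdges.
Variable p : pred nat.

Lemma free_edge_le1 x : free_edge p x <= 1.
Proof. by rewrite /free_edge; case: (_ && _). Qed.

Lemma free_edge0 x : p x || p x.-1 -> free_edge p x = 0.
Proof. by rewrite /free_edge; case: (p x); case: (p x.-1). Qed.

Lemma free_edges0 a : free_edges p a a = 0.
Proof. by rewrite /free_edges big_geq. Qed.

Lemma free_edges_cat a v b : a <= v < b ->
  free_edges p a b = free_edges p a v + free_edge p v.+1 + free_edges p v.+1 b.
Proof.
move=> /andP[av vb]; rewrite /free_edges (@big_cat_nat _ _ _ v.+1) //=; last lia.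
by rewrite (@big_ltn _ _ _ v.+1) ?addnA.
Qed.

Lemma free_edges_le a b : free_edges p a b <= b - a.
Proof.
rewrite /free_edges (@leq_trans (\sum_(a.+1 <= x < b.+1) 1)) //.
  by apply: leq_sum => x _; apply: free_edge_le1.
by rewrite sum_nat_const_nat muln1; lia.
Qed.

Lemma free_edges_pred0 a b : a <= b -> (forall x, a <= x <= b -> ~~ p x) ->
  free_edges p a b = b - a.
Proof.
move=> ab p0; rewrite /free_edges big_nat (eq_bigr (fun _ => 1)).
  by rewrite -big_nat sum_nat_const_nat muln1; lia.
by move=> x ax; rewrite /free_edge !p0 //; lia.
Qed.

Lemma free_edges_ltn a b y : a < b -> a <= y <= b -> p y -> free_edges p a b < b - a.
Proof.
move=> ab ayb py; have [v avb pv] := covered_edge ab ayb py.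
have fv : free_edge p v.+1 = 0 by apply: free_edge0; rewrite orbC.
rewrite (free_edges_cat avb) fv.
by have := free_edges_le a v; have := free_edges_le v.+1 b; lia.
Qed.

End FreeEdges.

Lemma eq_free_edges p q a b : {in [pred x | a <= x <= b], p =1 q} ->
  free_edges p a b = free_edges q a b.
Proof.
move=> pq; apply: eq_big_nat => x ax.
by rewrite /free_edge !pq // inE; lia.
Qed.

Lemma leq_free_edges p q a b : (forall x, a < x <= b -> free_edge p x <= free_edge q x) ->
  free_edges p a b <= free_edges q a b.
Proof. by move=> pq; rewrite /free_edges !big_nat; apply: leq_sum => x ax; apply: pq. Qed.

Lemma free_edges_subset p q a b : {in [pred x | a <= x <= b], subpred p q} ->
  free_edges q a b <= free_edges p a b.
Proof.
move=> pq; apply: leq_free_edges => x ax; rewrite /free_edge.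
case: (boolP (q x)) => [//|qx]; case: (boolP (q x.-1)) => [//|qx1] /=.
by rewrite (contraNN (pq x _) qx) ?(contraNN (pq x.-1 _) qx1) // inE; lia.
Qed.


Lemma eq_no_isolated_hole p q a b : {in [pred x | a <= x <= b], p =1 q} ->
  no_isolated_hole p a b -> no_isolated_hole q a b.
Proof.
move=> pq hp x ax; rewrite -pq ?inE // => /(hp x ax) [[ax' px]|[xb px]].
  by left; split=> //; rewrite -pq // inE; lia.
by right; split=> //; rewrite -pq // inE; lia.
Qed.

Lemma no_isolated_hole_cat p a v b : a <= v < b ->
  no_isolated_hole p a v -> no_isolated_hole p v.+1 b -> no_isolated_hole p a b.
Proof.
move=> avb hl hr x ax px; case: (leqP x v) => xv.
  by case: (hl x ltac:(lia) px) => -[? ?]; [left|right]; split=> //; lia.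
by case: (hr x ltac:(lia) px) => -[? ?]; [left|right]; split=> //; lia.
Qed.

Lemma no_isolated_hole_split p a v b : a <= v < b -> p v || p v.+1 ->
  no_isolated_hole p a b -> no_isolated_hole p a v /\ no_isolated_hole p v.+1 b.
Proof.
move=> avb pv hp; split=> x ax px.
  case: (hp x ltac:(lia) px) => -[xb px']; first by left.
  right; split=> //; rewrite ltn_neqAle (_ : x <= v) ?andbT; last lia.
  by apply: contraTneq pv => <-; rewrite negb_or px px'.
case: (hp x ltac:(lia) px) => -[xa px']; last by right.
left; split=> //; rewrite ltn_neqAle (_ : v.+1 <= x) ?andbT; last lia.
by apply: contraTneq pv => vx; subst x; rewrite negb_or px andbT.
Qed.

Lemma strat_no_isolated_hole a b T : a <= b -> is_strat a b T ->
  no_isolated_hole (coveredb a b T) a b.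
Proof.
elim: T a b => [|v L IHL R IHR] a b ab.
  move=> _ x ax /=; case: eqP => [ab'|ab'] /=.
    by rewrite (_ : x = a) ?eqxx //; lia.
  by case: (ltnP a x) => ax'; [left|right]; split=> //; lia.
move=> /is_strat_node[/andP[av vb] sL sR]; apply: (@no_isolated_hole_cat _ a v b); first lia.
  apply: eq_no_isolated_hole (IHL a v av sL) => x; rewrite inE => /andP[_ xv].
  by rewrite coveredb_node_l.
apply: eq_no_isolated_hole (IHR v.+1 b vb sR) => x; rewrite inE => /andP[vx _].
by rewrite coveredb_node_r.
Qed.

Lemma strat_size_bound a b T : a <= b -> is_strat a b T ->
  b.+1 - a <= free_edges (coveredb a b T) a b + 2 ^ height T.
Proof.
elim: T a b => [|v L IHL R IHR] a b ab.
  move=> _; case: (ltnP a b) => [ab'|ba]; last lia.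
  rewrite free_edges_pred0 //=; first lia.
  by move=> x _; rewrite (_ : (a == b) = false) //; apply/eqP; lia.
move=> /is_strat_node[/andP[av vb] sL sR].
have eL : free_edges (coveredb a b (Node v L R)) a v = free_edges (coveredb a v L) a v.
  by apply: eq_free_edges => x; rewrite inE => /andP[_ xv]; apply: coveredb_node_l.
have eR : free_edges (coveredb a b (Node v L R)) v.+1 b = free_edges (coveredb v.+1 b R) v.+1 b.
  by apply: eq_free_edges => x; rewrite inE => /andP[vx _]; apply: coveredb_node_r.
rewrite (free_edges_cat _ (_ : a <= v < b)) ?av // eL eR [height _]/= expnS.
have := leq_pexp2l (isT : 0 < 2) (leq_maxl (height L) (height R)).
have := leq_pexp2l (isT : 0 < 2) (leq_maxr (height L) (height R)).
have := IHL a v av sL; have := IHR v.+1 b vb sR; lia.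
Qed.

Lemma exists_crossing (f : nat -> nat) a b H : a <= b -> f a <= H < f b ->
  exists2 v, a <= v < b & f v <= H < f v.+1.
Proof.
elim: b => [|b IH] ab /andP[fa fb]; first by rewrite (_ : a = 0) in fa; lia.
have {}ab : a <= b by move: ab fa; rewrite leq_eqVlt => /predU1P[->|]; lia.
case: (leqP (f b) H) => fbH; first by exists b; [lia | rewrite fbH fb].
have /(IH ab)[v avb fv] : f a <= H < f b by rewrite fa fbH.
by exists v => //; lia.
Qed.

Lemma balanced_cut (p : pred nat) a b H : 0 < H -> a < b -> (exists2 y, a <= y <= b & p y) ->
  b.+1 - a <= free_edges p a b + 2 * H ->
  exists v, [/\ a <= v < b, p v || p v.+1, v.+1 - a <= free_edges p a v + H &
    b.+1 - v.+1 <= free_edges p v.+1 b + H].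
Proof.
move=> H0 ab [y ayb py] hsize.
(* [excess v] grows exactly at the edges {v, v+1} with a covered end: either the
   whole path has excess at most H, or we cut where the excess crosses H. *)
pose excess v := v.+1 - a - free_edges p a v.
have [ebH|Heb] := leqP (excess b) H.
  have [v avb pv] := covered_edge ab ayb py.
  exists v; split=> //; move: ebH; rewrite /excess (free_edges_cat _ avb) free_edge0 1?orbC //;
    have := free_edges_le p a v; have := free_edges_le p v.+1 b; lia.
have [v avb /andP[evH Hev]] : exists2 v, a <= v < b & excess v <= H < excess v.+1.
  by apply: exists_crossing; rewrite ?Heb ?andbT /excess ?free_edges0 //; lia.
have step : free_edges p a v.+1 = free_edges p a v + free_edge p v.+1.
  by rewrite (@free_edges_cat _ a v v.+1) ?free_edges0 ?addn0 //; lia.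
have pv : p v || p v.+1.
  move: Hev evH; rewrite /excess step /free_edge.
  by have := free_edges_le p a v; case: (p v); case: (p v.+1) => //=; lia.
exists v; split=> //; move: evH Hev hsize; rewrite /excess step (free_edges_cat _ avb);
  rewrite free_edge0 1?orbC //; have := free_edges_le p a v; have := free_edges_le p v.+1 b; lia.
Qed.

Lemma leaf_covers p a b : no_isolated_hole p a b ->
  (a == b) || ~~ has p (index_iota a b.+1) ->
  forall x, covered a b Leaf x <-> a <= x <= b /\ p x.
Proof.
move=> + leaf x /=; case: (eqVneq a b) leaf => [<- _ hp|ab /hasPn np _].
  have pa : p a by apply: contraT => /(hp a ltac:(lia)) [] []; rewrite ltnn.
  by split=> [[_ ->]|[ax _]]; split; rewrite ?leqnn //; lia.
split=> [[eab]|[axb px]]; first by rewrite eab eqxx in ab.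
by move: (np x); rewrite mem_index_iota px; lia.
Qed.

Lemma strategy_of_pred h p a b : a <= b -> no_isolated_hole p a b ->
  b.+1 - a <= free_edges p a b + 2 ^ h ->
  exists T, [/\ is_strat a b T, height T <= h &
    forall x, covered a b T x <-> a <= x <= b /\ p x].
Proof.
elim: h a b => [|h IH] a b ab hp hsize;
  (have [leaf|] := boolP ((a == b) || ~~ has p (index_iota a b.+1));
    first by exists Leaf; split=> //; apply: leaf_covers);
  rewrite negb_or negbK => /andP[ab' /hasP[y]]; rewrite mem_index_iota => ayb py.
  by have := @free_edges_ltn p a b y ltac:(lia) ltac:(lia) py; lia.
have [v [avb pv hL hR]] : exists v, [/\ a <= v < b, p v || p v.+1,
    v.+1 - a <= free_edges p a v + 2 ^ h & b.+1 - v.+1 <= free_edges p v.+1 b + 2 ^ h].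
  apply: balanced_cut; rewrite ?expn_gt0 -?expnS //; [lia | exists y => //; lia].
have [hpL hpR] := no_isolated_hole_split avb pv hp.
have [TL [sL hTL cL]] := IH a v ltac:(lia) hpL hL.
have [TR [sR hTR cR]] := IH v.+1 b ltac:(lia) hpR hR.
exists (Node v TL TR); split; [by [] | by rewrite /= ltnS geq_max hTL hTR |].
move=> x /=; rewrite cL cR; split=> [[] [xr px]|[xr px]]; try by split=> //; lia.
by case: (leqP x v) => xv; [left|right]; split=> //; lia.
Qed.

(** * Maximal covered sets *)

Lemma free_edges_subset_ltn p q a b y : no_isolated_hole p a b ->
  {in [pred x | a <= x <= b], subpred p q} -> a <= y <= b -> q y -> ~~ p y ->
  free_edges q a b < free_edges p a b.
Proof.
move=> hp pq ayb qy py.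
have sub a' b' : a <= a' -> b' <= b -> free_edges q a' b' <= free_edges p a' b'.
  by move=> aa' b'b; apply: free_edges_subset => x; rewrite inE => xr; apply: pq; rewrite inE; lia.
have [v [avb yv fp fq]] : exists v, [/\ a <= v < b, y \in [:: v; v.+1],
    free_edge p v.+1 = 1 & free_edge q v.+1 = 0].
  case: (hp y ayb py) => -[yr py'].
    by exists y.-1; rewrite prednK ?inE ?eqxx ?orbT /free_edge ?py ?py' ?qy //; try split=> //; lia.
  by exists y; rewrite ?inE ?eqxx /free_edge ?py ?py' ?qy ?andbF //; split=> //; lia.
rewrite (free_edges_cat _ avb) [X in _ < X](free_edges_cat _ avb) fp fq.
have := sub a v (leqnn a) ltac:(lia); have := sub v.+1 b ltac:(lia) (leqnn b); lia.
Qed.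

Lemma first_free_edge p a b : 0 < free_edges p a b ->
  exists y, [/\ a <= y < b, ~~ p y, ~~ p y.+1 & a < y -> p y.-1].
Proof.
rewrite lt0n sum_nat_seq_neq0 => ex.
have {ex} : exists x, (a < x <= b) && (free_edge p x != 0).
  by case/hasP: ex => x; rewrite mem_index_iota => xr /= fx; exists x; rewrite fx andbT; lia.
case/find_ex_minn=> x /andP[xr fx] xmin; exists x.-1.
have [px px1] : ~~ p x /\ ~~ p x.-1 by move: fx; rewrite /free_edge; case: (p x); case: (p x.-1).
rewrite prednK ?px ?px1; last lia.
split=> //; first lia.
move=> ay; apply: contraT => py2.
have : (a < x.-1 <= b) && (free_edge p x.-1 != 0) by rewrite /free_edge px1 py2; lia.
by move/xmin; lia.
Qed.

Section CoverFirstHoleVertex.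
Variables (p : pred nat) (a b y : nat).
Hypotheses (ayb : a <= y < b) (py : ~~ p y) (py1 : ~~ p y.+1) (p_y1 : a < y -> p y.-1).

(* Covering y alone would isolate y+1 exactly when [lonely]; then y+1 is covered too. *)
Let lonely := (y.+1 == b) || p y.+2.
Let q : pred nat := [pred x | p x || (x == y) || lonely && (x == y.+1)].

Let q_y : q y.
Proof. by rewrite /q /= eqxx orbT. Qed.

Let q_succ : q y.+1 = lonely.
Proof. by rewrite /q /= (negbTE py1) (gtn_eqF (ltnSn y)) eqxx andbT. Qed.

Let q_other x : x != y -> x != y.+1 -> q x = p x.
Proof. by move=> xy xy1; rewrite /q /= (negbTE xy) (negbTE xy1) andbF !orbF. Qed.

Lemma cover_first_hole_no_isolated : no_isolated_hole p a b -> no_isolated_hole q a b.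
Proof.
move=> hp x xr qx.
have xy : x != y by apply: contraNneq qx => ->; apply: q_y.
have [exy|xy1] := eqVneq x y.+1.
  subst x; move: qx; rewrite q_succ /lonely negb_or => /andP[yb py2].
  right; split; first lia.
  by rewrite q_other //; apply/eqP; lia.
rewrite q_other // in qx; case: (hp x xr qx) => -[xb px'].
  left; split=> //; have [ex|x1y1] := eqVneq x.-1 y.+1; last by rewrite q_other //; apply/eqP; lia.
  by rewrite ex q_succ /lonely (_ : y.+2 = x) ?(negbTE qx) ?orbF //; try apply/eqP; lia.
right; split=> //; rewrite q_other //; apply/eqP => ex.
by move: (p_y1 ltac:(lia)); rewrite -ex (negbTE qx).
Qed.

Lemma cover_first_hole_free_edges : free_edges p a b <= (free_edges q a b).+1.
Proof.
have q_other2 x : x != y -> x != y.+1 -> x.-1 != y -> x.-1 != y.+1 ->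
    free_edge q x = free_edge p x.
  by move=> *; rewrite /free_edge !q_other.
have left_part : free_edges p a y <= free_edges q a y.
  apply: leq_free_edges => x xr; have [->|xy] := eqVneq x y.
    by rewrite free_edge0 ?p_y1 ?orbT //; lia.
  by rewrite q_other2 //; apply/eqP; lia.
have right_part : free_edges p y.+1 b <= free_edges q y.+1 b.
  apply: leq_free_edges => x xr; have [ex|xy2] := eqVneq x y.+2.
    have yb : (y.+1 == b) = false by apply/eqP; lia.
    by rewrite ex /free_edge /= q_succ /lonely yb q_other ?(negbTE py1) //; apply/eqP; lia.
  by rewrite q_other2 //; apply/eqP; lia.
rewrite (free_edges_cat _ ayb) [X in _ <= X.+1](free_edges_cat _ ayb).
by have := free_edge_le1 p y.+1; lia.
Qed.

End CoverFirstHoleVertex.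

Lemma extend_covered p a b : no_isolated_hole p a b -> 0 < free_edges p a b ->
  exists q : pred nat, [/\ no_isolated_hole q a b, free_edges p a b <= (free_edges q a b).+1,
    subpred p q & exists2 y, a <= y <= b & q y && ~~ p y].
Proof.
move=> hp /first_free_edge[y [ayb py py1 p_y1]].
exists [pred x | p x || (x == y) || ((y.+1 == b) || p y.+2) && (x == y.+1)]; split.
- exact: cover_first_hole_no_isolated.
- exact: cover_first_hole_free_edges.
- by move=> x /= ->.
- by exists y; rewrite /= ?eqxx ?orbT ?py //; lia.
Qed.

Lemma in_Tk_bounds n k T : in_Tk n k T ->
  no_isolated_hole (coveredb 0 n.-1 T) 0 n.-1 /\ n <= free_edges (coveredb 0 n.-1 T) 0 n.-1 + 2 ^ k.
Proof.
move=> [sT hT]; split; first exact: strat_no_isolated_hole.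
have := strat_size_bound (leq0n n.-1) sT; have := leq_pexp2l (isT : 0 < 2) hT; lia.
Qed.

Lemma in_Tk_of_pred n k p : no_isolated_hole p 0 n.-1 ->
  n <= free_edges p 0 n.-1 + 2 ^ k ->
  exists T, in_Tk n k T /\ forall x, CT n T x <-> x <= n.-1 /\ p x.
Proof.
move=> hp hsize; have [|T [sT hT cT]] := @strategy_of_pred k p 0 n.-1 (leq0n _) hp; first lia.
by exists T; split=> // x; rewrite /CT cT.
Qed.

Theorem maximal_covered_setE n k (C : nat -> Prop) (p : pred nat) : 2 ^ k < n ->
  (forall x, C x <-> p x) -> (forall x, p x -> x < n) ->
  maximal_covered_set n k C <->
  no_isolated_hole p 0 n.-1 /\ n = free_edges p 0 n.-1 + 2 ^ k.
Proof.
move=> kn Cp p_lt; split.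
- move=> [T [Tk [CT_C not_max]]].
  have eqp : {in [pred x | 0 <= x <= n.-1], coveredb 0 n.-1 T =1 p}.
    by move=> x _; apply/idP/idP => [/coveredP/CT_C/Cp|/Cp/CT_C/coveredP].
  have [hp hsize] := in_Tk_bounds Tk.
  rewrite (eq_free_edges eqp) in hsize; have {}hp := eq_no_isolated_hole eqp hp.
  split=> //; apply/eqP; rewrite eqn_leq hsize /= leqNgt; apply/negP => small.
  have [|q [hq fq pq [y yr /andP[qy py]]]] := extend_covered hp; first lia.
  have [|T' [Tk' CT'E]] := @in_Tk_of_pred n k q hq; first lia.
  apply: not_max; exists T'; split=> //; split; last first.
    exists y; split; first by apply/CT'E; split=> //; lia.
    by move=> /coveredP; rewrite eqp ?(negbTE py) // inE; lia.
  move=> x /coveredP cx; have xr := coveredb_bounds (proj1 Tk) cx.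
  by apply/(CT'E x); split; [lia | apply: pq; rewrite -(eqp x) // inE].
- move=> [hp hsize]; have [|T [Tk CTE]] := @in_Tk_of_pred n k p hp; first lia.
  exists T; split=> //; split=> [x|[T' [Tk' [sub [y [CT'y CTy]]]]]].
    by rewrite CTE Cp; split=> [px|[]//]; have := p_lt x px; lia.
  have [_ size'] := in_Tk_bounds Tk'.
  have yr := coveredb_bounds (proj1 Tk') (introT (coveredP _ _ _ _) CT'y).
  suff : free_edges (coveredb 0 n.-1 T') 0 n.-1 < free_edges p 0 n.-1 by lia.
  apply: (free_edges_subset_ltn hp _ yr); first by move=> x xr px; apply/coveredP/sub/CTE.
    exact/coveredP.
  by apply: contra_notN CTy => py; apply/CTE.
Qed.

(** * Minimal representations by cyclic intervals *)

Definition rep_pred n s (u l : nat -> nat) : pred nat := fun x =>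
  has (fun t => has (fun w => w %% n == x) (index_iota (u t) (u t + l t))) (index_iota 1 s.+1).

Lemma rep_predP n s u l x :
  reflect (exists t, 1 <= t <= s /\ cyc_interval n (u t) (l t) x) (rep_pred n s u l x).
Proof.
apply: (iffP hasP) => [[t ts /hasP[w wr /eqP <-]]|[t [ts [w [wr ->]]]]].
  by exists t; split; [move: ts; rewrite mem_index_iota; lia | exists w; rewrite -mem_index_iota].
by exists t; rewrite ?mem_index_iota; [lia | apply/hasP; exists w; rewrite ?mem_index_iota].
Qed.

Lemma is_rep_pred n C s u l : is_rep n C s u l -> forall x, C x <-> rep_pred n s u l x.
Proof. by move=> [_ [_ CE]] x; rewrite CE; split=> /rep_predP. Qed.

Lemma cyc_interval0 n u x : ~ cyc_interval n u 0 x.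
Proof. by move=> [w]; lia. Qed.

Lemma cyc_interval_shift n u l x : cyc_interval n (u + n) l x <-> cyc_interval n u l x.
Proof.
split=> [[w [wr ->]]|[w [wr ->]]]; last by exists (w + n); rewrite modnDr; split=> //; lia.
have nw : n <= w by lia.
by exists (w - n); split; [lia | rewrite -[in LHS](subnK nw) modnDr].
Qed.

Lemma cyc_interval_merge n u1 l1 u2 l2 x : u1 <= u2 <= u1 + l1 ->
  cyc_interval n u1 (maxn l1 (u2 + l2 - u1)) x <->
  cyc_interval n u1 l1 x \/ cyc_interval n u2 l2 x.
Proof.
move=> u12; split=> [[w [wr ->]]|[[w [wr ->]]|[w [wr ->]]]]; try by exists w; split=> //; lia.
by case: (ltnP w (u1 + l1)) => wl; [left|right]; exists w; split=> //; lia.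
Qed.

Lemma is_rep_drop n C s u l j (l' : nat -> nat) : is_rep n C s u l -> 1 <= j <= s ->
  (forall x, C x <-> exists t, [/\ 1 <= t <= s, t != j & cyc_interval n (u t) (l' t) x]) ->
  is_rep n C s.-1 (fun t => if t < j then u t else u t.+1)
                  (fun t => if t < j then l' t else l' t.+1).
Proof.
move=> [u_lt [u_le _]] js CE; split; last split.
- move=> t ts /=; case: (ltnP t j) => tj; case: (ltnP t.+1 j) => t1j; try lia.
  + by apply: u_lt; lia.
  + by apply: (@ltn_trans (u t.+1)); apply: u_lt; lia.
  + by apply: u_lt; lia.
- by move=> t ts /=; case: ifP => _; apply: u_le; lia.
- move=> x; rewrite CE; split=> [[t [ts tj cx]]|[t [ts /=]]].
    case: (ltnP t j) => tj'; first by exists t; rewrite tj'; split=> //; lia.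
    have tj2 : (t <= j) = false by apply/negbTE; rewrite -ltnNge; lia.
    by exists t.-1; rewrite prednK ?tj2; [split=> //; lia | lia].
  by case: (ltnP t j) => tj cx; [exists t | exists t.+1]; split=> //; apply/eqP; lia.
Qed.

Section MinimalRepresentation.
Variables (n : nat) (C : nat -> Prop) (s : nat) (u l : nat -> nat).
Hypothesis min_rep : is_min_rep n C s u l.

Let rep := proj1 min_rep.

Lemma min_rep_no_drop j l' : 1 <= j <= s ->
  ~ (forall x, C x <-> exists t, [/\ 1 <= t <= s, t != j & cyc_interval n (u t) (l' t) x]).
Proof. by move=> js /(is_rep_drop rep js)/(proj2 min_rep); lia. Qed.

Lemma min_rep_len_gt0 t : 1 <= t <= s -> 0 < l t.
Proof.
move=> ts; rewrite lt0n; apply/eqP => lt0; apply: (@min_rep_no_drop t l ts) => x.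
rewrite (proj2 (proj2 rep)); split=> [[t' [t's cx]]|[t' [t's _ cx]]]; last by exists t'.
by exists t'; split=> //; apply: contraPneq cx => ->; rewrite lt0; apply: cyc_interval0.
Qed.

Lemma min_rep_gap t : 1 <= t < s -> u t + l t < u t.+1.
Proof.
move=> ts; rewrite ltnNge; apply/negP => overlap.
have ut := (proj1 rep) t ts.
pose l' i := if i == t then maxn (l t) (u t.+1 + l t.+1 - u t) else l i.
apply: (@min_rep_no_drop t.+1 l'); first lia.
move=> x; rewrite (proj2 (proj2 rep)).
have merged : cyc_interval n (u t) (l' t) x <->
    cyc_interval n (u t) (l t) x \/ cyc_interval n (u t.+1) (l t.+1) x.
  by rewrite /l' eqxx /= cyc_interval_merge //; lia.
split=> [[t' [t's cx]]|[t' [t's t't cx]]].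
- have [et|t't] := eqVneq t' t.+1.
    by exists t; split; [lia | apply/eqP; lia | apply/merged; right; rewrite -et].
  have [et|t't'] := eqVneq t' t.
    by exists t; split; [lia | apply/eqP; lia | apply/merged; left; rewrite -et].
  by exists t'; rewrite /l' (negbTE t't').
- have [et|t't'] := eqVneq t' t; last by exists t'; rewrite /l' (negbTE t't') in cx.
  by subst t'; case/merged: cx => cx; [exists t | exists t.+1]; split=> //; lia.
Qed.

Lemma min_rep_wrap_gap : 1 < s -> u s + l s < u 1 + n.
Proof.
move=> s1; rewrite ltnNge; apply/negP => overlap.
have us := (proj1 (proj2 rep)) s ltac:(lia).
pose l' i := if i == s then maxn (l s) (u 1 + n + l 1 - u s) else l i.
apply: (@min_rep_no_drop 1 l'); first lia.
move=> x; rewrite (proj2 (proj2 rep)).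
have merged : cyc_interval n (u s) (l' s) x <->
    cyc_interval n (u s) (l s) x \/ cyc_interval n (u 1) (l 1) x.
  by rewrite /l' eqxx /= cyc_interval_merge 1?cyc_interval_shift //; lia.
split=> [[t' [t's cx]]|[t' [t's t't cx]]].
- have [et|t't] := eqVneq t' 1.
    by exists s; split; [lia | apply/eqP; lia | apply/merged; right; rewrite -et].
  have [et|t's'] := eqVneq t' s.
    by exists s; split; [lia | apply/eqP; lia | apply/merged; left; rewrite -et].
  by exists t'; rewrite /l' (negbTE t's').
- have [et|t's'] := eqVneq t' s; last by exists t'; rewrite /l' (negbTE t's') in cx.
  by subst t'; case/merged: cx => cx; [exists s | exists 1]; split=> //; lia.
Qed.

End MinimalRepresentation.

(** * Counting free edges along the cycle *)

Lemma eq_modn_window n m w w' : m <= w < m + n -> m <= w' < m + n ->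
  w %% n = w' %% n -> w = w'.
Proof.
wlog le_ww' : w w' / w <= w' => [hwlog|] wr w'r eqw.
  by case: (leqP w w') => [|/ltnW] le; [|apply/esym]; apply: hwlog.
have dvd : n %| w' - w by rewrite -eqn_mod_dvd // eqw.
case: (posnP (w' - w)) => [|pos]; first lia.
by have := dvdn_leq pos dvd; lia.
Qed.

Lemma predn_modn n w : 0 < w %% n -> w.-1 %% n = (w %% n).-1.
Proof.
case: n => [|n] pos; first by rewrite !modn0.
rewrite {1}(divn_eq w n.+1) -subn1 -addnBA // modnMDl modn_small; lia.
Qed.

Lemma succn_modn n w : (w %% n).+1 < n -> w.+1 %% n = (w %% n).+1.
Proof. by move=> lt; rewrite {1}(divn_eq w n) -addnS modnMDl modn_small. Qed.

Lemma sum_periodic (g : nat -> nat) n m : (forall w, g (w + n) = g w) ->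
  \sum_(m <= w < m + n) g w = \sum_(0 <= w < n) g w.
Proof.
move=> gper; elim: m => [|m IH]; first by rewrite add0n.
case: n gper IH => [|n] gper IH; first by rewrite !big_geq // addn0.
rewrite -IH addSn big_nat_recr /= ?(@big_ltn _ _ _ m) ?gper 1?addnC //; lia.
Qed.

(* [w + n.-1] stands for w - 1 modulo n, avoiding the truncated [0.-1]. *)
Definition cyc_free_edge n (p : pred nat) w : nat := ~~ p (w %% n) && ~~ p ((w + n.-1) %% n).

Lemma cyc_free_edges_split n p : 0 < n ->
  \sum_(0 <= x < n) cyc_free_edge n p x = (~~ p 0 && ~~ p n.-1) + free_edges p 0 n.-1.
Proof.
move=> n_gt0; rewrite big_ltn // /cyc_free_edge mod0n add0n modn_small; last lia.
congr (_ + _); rewrite /free_edges prednK //; apply: eq_big_nat => x xr.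
have -> : x + n.-1 = x.-1 + n by lia.
by rewrite modnDr !modn_small //; lia.
Qed.

Lemma cyc_free_edge_periodic n p w : cyc_free_edge n p (w + n) = cyc_free_edge n p w.
Proof. by rewrite /cyc_free_edge addnAC !modnDr. Qed.

Lemma no_isolated_hole_cyc n p w : 0 < n -> no_isolated_hole p 0 n.-1 ->
  ~~ p (w %% n) -> p (w.-1 %% n) -> p (w.+1 %% n) -> False.
Proof.
move=> n_gt0 hp pw pw1 pw2; have wr : 0 <= w %% n <= n.-1 by have := ltn_pmod w n_gt0; lia.
case: (hp _ wr pw) => -[? /negP[]]; first by rewrite -predn_modn.
by rewrite -succn_modn //; lia.
Qed.

Lemma boundary_count_iff (C : nat -> Prop) (p : pred nat) a b m N : (forall x, C x <-> p x) ->
  m + (~~ p a && ~~ p b) = N <-> (~ C a /\ ~ C b) /\ m.+1 = N \/ (C a \/ C b) /\ m = N.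
Proof. by move=> Cp; rewrite !Cp; case: (p a); case: (p b) => /=; lia. Qed.

Section Arcs.
Variables (n s : nat) (u l : nat -> nat).
Hypotheses (s_gt0 : 0 < s) (us_lt : u s < n)
  (l_gt0 : forall t, 1 <= t <= s -> 0 < l t)
  (gap_gt0 : forall t, 1 <= t < s -> u t + l t < u t.+1)
  (wrap_gap_gt0 : u s + l s < u 1 + n).

Local Notation p := (rep_pred n s u l).

(* Vertices are lifted to the line: w stands for w mod n, and the arcs are the
   intervals [u t, u t + l t) of the window [u 1, u 1 + n). *)
Local Notation covw w := (p (w %% n)).

Definition next_start t := if t < s then u t.+1 else u 1 + n.

Lemma next_start_last : next_start s = u 1 + n.
Proof. by rewrite /next_start ltnn. Qed.

Lemma arc_end_lt_start i j : 1 <= i < j -> j <= s -> u i + l i < u j.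
Proof.
elim: j => [|j IH] ij js; first lia.
have [->|ij'] := eqVneq i j; first by apply: gap_gt0; lia.
have := IH ltac:(lia) ltac:(lia); have := @gap_gt0 j ltac:(lia); lia.
Qed.

Lemma start_le i j : 1 <= i <= j -> j <= s -> u i <= u j.
Proof.
move=> ij js; have [->//|ij'] := eqVneq i j.
by have := @arc_end_lt_start i j ltac:(lia) js; lia.
Qed.

Lemma arc_end_le i j : 1 <= i <= j -> j <= s -> u i + l i <= u j + l j.
Proof.
move=> ij js; have [->//|ij'] := eqVneq i j.
by have := @arc_end_lt_start i j ltac:(lia) js; lia.
Qed.

Lemma arc_end_lt_next t : 1 <= t <= s -> u t + l t < next_start t.
Proof.
move=> ts; rewrite /next_start; case: (ltnP t s) => [tlt|st]; first by apply: gap_gt0; lia.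
by rewrite (_ : t = s) //; lia.
Qed.

Lemma next_start_le t : 1 <= t <= s -> next_start t <= u 1 + n.
Proof.
by move=> ts; rewrite /next_start; case: (ltnP t s) => // ?; have := @start_le t.+1 s; lia.
Qed.

Lemma arc_covered t w : 1 <= t <= s -> u t <= w < u t + l t -> covw w.
Proof. by move=> ts wr; apply/rep_predP; exists t; split=> //; exists w. Qed.

Lemma covered_arc w : u 1 <= w < u 1 + n -> covw w ->
  exists2 t, 1 <= t <= s & u t <= w < u t + l t.
Proof.
move=> wr /rep_predP[t [ts [w' [w'r eqw]]]]; exists t => //.
have := @start_le 1 t ltac:(lia) ltac:(lia); have := @arc_end_le t s ltac:(lia) (leqnn s).
by move=> ? ?; rewrite (@eq_modn_window n (u 1) w w') //; lia.
Qed.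

Lemma gap_uncovered t w : 1 <= t <= s -> u t + l t <= w < next_start t -> ~~ covw w.
Proof.
move=> ts wr; apply/negP => /covered_arc[|t' t's wt'].
  by have := @start_le 1 t ltac:(lia) ltac:(lia); have := next_start_le ts; lia.
have [t't|tt'] := leqP t' t; first by have := @arc_end_le t' t ltac:(lia) ltac:(lia); lia.
move: wr; rewrite /next_start ifT; last lia.
by have := @start_le t.+1 t' ltac:(lia) ltac:(lia); lia.
Qed.

Lemma next_start_covered t : 1 <= t <= s -> covw (next_start t).
Proof.
move=> ts; rewrite /next_start; case: (ltnP t s) => ts'.
  by apply: (@arc_covered t.+1); have := @l_gt0 t.+1; lia.
by rewrite modnDr; apply: (@arc_covered 1); have := @l_gt0 1; lia.
Qed.

Lemma cyc_free_edge_pred w : 0 < w -> cyc_free_edge n p w = ~~ covw w && ~~ covw w.-1.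
Proof. by move=> w0; rewrite /cyc_free_edge (_ : w + n.-1 = w.-1 + n) ?modnDr //; lia. Qed.

Lemma segment_free_edges t : 1 <= t <= s ->
  \sum_(u t <= w < next_start t) cyc_free_edge n p w + (l t).+1 = next_start t - u t.
Proof.
move=> ts; have lt := l_gt0 ts; have en := arc_end_lt_next ts.
rewrite (@big_cat_nat _ _ _ (u t + l t)) /= ?(@big_ltn _ _ _ (u t + l t)) //; try lia.
rewrite big_nat big1 => [|w wr]; last by rewrite /cyc_free_edge (arc_covered ts wr).
rewrite cyc_free_edge_pred ?(@arc_covered t (u t + l t).-1) ?andbF ?add0n; try lia.
rewrite big_nat (eq_bigr (fun=> 1)) => [|w wr]; last first.
  by rewrite cyc_free_edge_pred ?(@gap_uncovered t) //; lia.
by rewrite -big_nat sum_nat_const_nat; lia.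
Qed.

Lemma prefix_free_edges j : 1 <= j <= s ->
  \sum_(u 1 <= w < next_start j) cyc_free_edge n p w + \sum_(1 <= t < j.+1) (l t).+1 =
  next_start j - u 1.
Proof.
elim: j => [|j IH] js; first lia.
have [->|j0] := posnP j; first by rewrite big_nat1; apply: segment_free_edges.
have nj : next_start j = u j.+1 by rewrite /next_start ifT //; lia.
have := segment_free_edges js; have := IH ltac:(lia); rewrite nj => IHj seg.
have u1j := @start_le 1 j.+1 ltac:(lia) ltac:(lia); have ejn := arc_end_lt_next js.
rewrite (@big_cat_nat _ _ _ (u j.+1)) 1?big_nat_recr /=; lia.
Qed.

Lemma arcs_free_edges :
  \sum_(0 <= x < n) cyc_free_edge n p x + \sum_(1 <= t < s.+1) (l t).+1 = n.
Proof.
have := @prefix_free_edges s ltac:(lia); rewrite next_start_last.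
by rewrite sum_periodic => [|w]; [lia | apply: cyc_free_edge_periodic].
Qed.

Lemma arc_start_of_hole w : u 1 < w < u 1 + n -> covw w -> ~~ covw w.-1 ->
  exists2 t, 1 <= t <= s & w = u t.
Proof.
move=> wr cw nc; have [t ts wt] := @covered_arc w ltac:(lia) cw.
by exists t => //; apply: contraNeq nc => wu; apply: (@arc_covered t) => //; lia.
Qed.

Lemma arc_end_of_hole w : u 1 < w < u 1 + n -> covw w.-1 -> ~~ covw w ->
  exists2 t, 1 <= t <= s & w = u t + l t.
Proof.
move=> wr cw nc; have [t ts wt] := @covered_arc w.-1 ltac:(lia) cw.
by exists t => //; apply: contraNeq nc => wu; apply: (@arc_covered t) => //; lia.
Qed.

Lemma no_isolated_hole_arcs : no_isolated_hole p 0 n.-1 ->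
  [/\ u 1 != 1, u s + l s != n.-1 & forall t, 1 <= t <= s -> u t + l t + 2 <= next_start t].
Proof.
move=> hp; have ls := @l_gt0 s ltac:(lia); have u1s := @start_le 1 s ltac:(lia) (leqnn s).
split.
- apply/eqP => u1; have p1 : covw (u 1) by apply: (@arc_covered 1); have := @l_gt0 1; lia.
  have p0 : ~~ covw n by apply: (@gap_uncovered s); rewrite ?next_start_last; lia.
  rewrite u1 modn_small in p1; last lia; rewrite modnn in p0.
  by case: (hp 0 ltac:(lia) p0) => -[]; rewrite ?p1.
- apply/eqP => usn.
  have pn : ~~ covw n.-1 by apply: (@gap_uncovered s); rewrite ?next_start_last; lia.
  have pn1 : covw n.-1.-1 by apply: (@arc_covered s); lia.
  rewrite !modn_small in pn pn1; try lia.
  by case: (hp n.-1 ltac:(lia) pn) => -[]; rewrite ?pn1 //; lia.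
- move=> t ts; rewrite leqNgt; apply/negP => short.
  have en := arc_end_lt_next ts.
  apply: (@no_isolated_hole_cyc n p (u t + l t)) => //; first lia.
  + by apply: (@gap_uncovered t) => //; lia.
  + by apply: (@arc_covered t) => //; have := l_gt0 ts; lia.
  + by rewrite (_ : (u t + l t).+1 = next_start t) ?next_start_covered //; lia.
Qed.

Lemma arcs_no_isolated_hole : u 1 != 1 -> u s + l s != n.-1 ->
  (forall t, 1 <= t <= s -> u t + l t + 2 <= next_start t) -> no_isolated_hole p 0 n.-1.
Proof.
move=> u1 usn gaps x xr px.
have ls := @l_gt0 s ltac:(lia); have u1s := @start_le 1 s ltac:(lia) (leqnn s).
have := gaps s ltac:(lia); rewrite next_start_last => gap_s.
have cu1 : covw (u 1) by apply: (@arc_covered 1); have := @l_gt0 1; lia.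
have [x0|x0] := posnP x.
  subst x; right; split; first lia; apply/negP => p1.
  have [u0|u2] := leqP (u 1) 1.
    by rewrite (_ : u 1 = 0) ?mod0n ?(negbTE px) in cu1; lia.
  have cn1 : covw n.+1 by rewrite -addn1 addnC modnDr modn_small //; lia.
  have cn : ~~ covw n.+1.-1 by rewrite /= modnn.
  have [t ts ntu] := @arc_start_of_hole n.+1 ltac:(lia) cn1 cn.
  by have := @start_le t s ltac:(lia) (leqnn s); lia.
have [xn|xn] := eqVneq x n.-1.
  subst x; left; split; first lia; apply/negP => pn1.
  have [u1n|u1n] := eqVneq (u 1) n.-1.
    by rewrite u1n modn_small ?(negbTE px) in cu1; lia.
  have cn2 : covw n.-1.-1 by rewrite modn_small //; lia.
  have cn1 : ~~ covw n.-1 by rewrite modn_small //; lia.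
  have [t ts ntu] := @arc_end_of_hole n.-1 ltac:(lia) cn2 cn1.
  have [ltn|st] := ltnP t s; last by rewrite (_ : s = t) -?ntu ?eqxx in usn; lia.
  have := gaps t ts; have := @start_le t.+1 s ltac:(lia) (leqnn s).
  by rewrite /next_start ltn; lia.
pose w := if u 1 <= x then x else x + n.
have wr : u 1 <= w < u 1 + n by rewrite /w; case: ifP; lia.
have wx : w %% n = x by rewrite /w; case: ifP => _; rewrite ?modnDr modn_small //; lia.
have wu1 : w != u 1 by apply: contraNneq px => wu; rewrite -wx wu.
case: (boolP (p x.-1)) => [px1|]; last by left; split.
case: (boolP (p x.+1)) => [px2|]; last by right; split=> //; lia.
have cw1 : covw w.-1 by rewrite predn_modn wx //; lia.
have cw : ~~ covw w by rewrite wx.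
have [t ts wt] := @arc_end_of_hole w ltac:(lia) cw1 cw.
have := gaps t ts; have := next_start_le ts => ns_le gap_t.
have /negP[] : ~~ covw w.+1 by apply: (@gap_uncovered t); lia.
by rewrite succn_modn wx //; lia.
Qed.

Theorem maximal_covered_set_arcsE k (C : nat -> Prop) : 2 ^ k < n -> (forall x, C x <-> p x) ->
  maximal_covered_set n k C <->
  [/\ u 1 != 1 /\ u s + l s != n.-1,
      (forall t, 1 <= t < s -> u t + l t + 2 <= u t.+1) /\ u s + l s + 2 <= u 1 + n &
      (~ C 0 /\ ~ C n.-1) /\ (\sum_(1 <= t < s.+1) l t + s).+1 = 2 ^ k \/
      (C 0 \/ C n.-1) /\ \sum_(1 <= t < s.+1) l t + s = 2 ^ k].
Proof.
move=> kn Cp.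
have p_lt x : p x -> x < n by case/rep_predP=> t [_ [w [_ ->]]]; apply: ltn_pmod; lia.
have gapsE : (forall t, 1 <= t <= s -> u t + l t + 2 <= next_start t) <->
    (forall t, 1 <= t < s -> u t + l t + 2 <= u t.+1) /\ u s + l s + 2 <= u 1 + n.
  split=> [gaps|[gaps gap_s] t ts]; first split.
  - by move=> t ts; have := gaps t ltac:(lia); rewrite /next_start ifT //; lia.
  - by have := gaps s ltac:(lia); rewrite next_start_last.
  - rewrite /next_start; case: (ltnP t s) => [tlt|st]; first by apply: gaps; lia.
    by rewrite (_ : t = s) //; lia.
have count := arcs_free_edges; rewrite cyc_free_edges_split in count; last lia.
have sumE : \sum_(1 <= t < s.+1) (l t).+1 = \sum_(1 <= t < s.+1) l t + s.
  rewrite (eq_bigr (fun t => l t + 1)) => [|t _]; last by rewrite addn1.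
  by rewrite big_split sum_nat_const_nat /=; lia.
rewrite sumE in count.
rewrite (maximal_covered_setE kn Cp p_lt).
split=> [[/no_isolated_hole_arcs[u1 usn /gapsE gaps] fe]|[[u1 usn] /gapsE gaps]].
  by split=> //; rewrite -(@boundary_count_iff C p 0 n.-1 _ _ Cp); lia.
rewrite -(@boundary_count_iff C p 0 n.-1 _ _ Cp) => sum.
by split; [apply: arcs_no_isolated_hole | lia].
Qed.

End Arcs.

Lemma cyc_interval_full n u l x : u < n -> u + n <= u + l -> x < n -> cyc_interval n u l x.
Proof.
move=> un full xn; exists (if u <= x then x else x + n).
by case: ifP => ux; rewrite ?modnDr modn_small //; lia.
Qed.

Lemma not_maximal_empty n k (C : nat -> Prop) : 0 < k -> 2 ^ k < n -> (forall x, ~ C x) ->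
  ~ maximal_covered_set n k C.
Proof.
move=> k0 kn C0; have Cp x : C x <-> pred0 x by split=> [/C0|].
have k2 : 2 <= 2 ^ k := leq_pexp2l (isT : 0 < 2) k0.
by rewrite (maximal_covered_setE kn Cp) // free_edges_pred0 // => -[_]; lia.
Qed.

Lemma not_maximal_full n k (C : nat -> Prop) : 2 ^ k < n -> (forall x, C x <-> x < n) ->
  ~ maximal_covered_set n k C.
Proof.
move=> kn Cn; rewrite (@maximal_covered_setE n k C [pred x | x < n]) // => -[_].
rewrite /free_edges big_nat big1 => [|x xr]; first lia.
by apply: free_edge0; rewrite !inE; lia.
Qed.

Local Open Scope ring_scope.

Theorem proposition3p1 (k n : nat) (C : nat -> Prop) (s : nat) (u l : nat -> nat) :
  (2 <= k)%N -> (2 ^ k < n)%N ->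
  is_min_rep n C s u l ->
  let c : int := (2 ^ k)%:Z - 2 in
  maximal_covered_set n k C <->
  [/\ (* (i) *)
      (u 1%N <> 1%N /\ (u s)%:Z + (l s)%:Z - 1 <> n%:Z - 2),
      (* (ii) *)
      ((forall t, (1 <= t < s)%N ->
          (u t.+1)%:Z - ((u t)%:Z + (l t)%:Z) >= 2) /\
       (u 1%N)%:Z - ((u s)%:Z + (l s)%:Z - n%:Z) >= 2) &
      (* (iii) *)
      (((~ C 0%N /\ ~ C (n - 1)%N) /\
          (\sum_(1 <= t < s.+1) l t)%:Z = c + 1 - s%:Z) \/
       ((C 0%N \/ C (n - 1)%N) /\
          (\sum_(1 <= t < s.+1) l t)%:Z = c + 2 - s%:Z))].
Proof.
move=> k2 kn min_rep c; rewrite /c subn1.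
have rep := proj1 min_rep; have Cp := is_rep_pred rep.
have k4 : (4 <= 2 ^ k)%N := leq_pexp2l (isT : (0 < 2)%N) k2.
have [s0|s_gt0] := posnP s.
  have C0 x : ~ C x by rewrite Cp /rep_pred s0.
  split=> [/(not_maximal_empty (ltnW k2) kn C0)//|[_ _ [[_]|[[/C0|/C0]]]]] //.
  by rewrite s0 big_geq //; lia.
have us_lt : (u s < n)%N by have := (proj1 (proj2 rep)) s; lia.
have [wrap|full] := ltnP (u s + l s) (u 1%N + n); last first.
  have s1 : s = 1%N.
    by case: (ltnP 1 s) => [s1|]; [have := min_rep_wrap_gap min_rep s1 | ]; lia.
  subst s.
  have Cn x : C x <-> (x < n)%N.
    rewrite Cp; split=> [/rep_predP[t [_ [w [_ ->]]]]|xn]; first by apply: ltn_pmod; lia.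
    by apply/rep_predP; exists 1%N; split; [lia | apply: cyc_interval_full].
  by split=> [/(not_maximal_full kn Cn)//|[_ [_]]]; lia.
rewrite (maximal_covered_set_arcsE s_gt0 us_lt (min_rep_len_gt0 min_rep) (min_rep_gap min_rep)
  wrap kn Cp).
split=> -[[i1 i2] [ii1 ii2] iii]; (split; [lia | split; [move=> t /ii1; lia | lia] |]);
  by case: iii => -[? e]; [left|right]; split=> //; lia.
Qed.
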